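(* Let $A, C, D$ be binary random variables, with $A$ taking values $a,\overline{a}$, $C$ taking values $c,\overline{c}$, $D$ taking values $d,\overline{d}$, and let $Y$ be a real random variable with finite expectation. Suppose the joint distribution factorizes as \[ p(A,C,D,Y)=p(D)\,p(C\mid D)\,p(A\mid C)\,p(Y\mid A,C). \] Assume that $C$ and $D$ are dependent, and that every event $\{A=x, C=y, D=z\}$ has positive probability. If $E[Y\mid A,D]$ and $E[A\mid D]$ are both nondecreasing or both nonincreasing in $D$, then $RD_{obs}\ge RD_{true}$. If $E[Y\mid A,D]$ and $E[A\mid D]$ are one nondecreasing and the other nonincreasing in $D$, then $RD_{obs}\le RD_{true}$.
   Context: $RD_{true}=E[Y|a,c]p(c)+E[Y|a,\overline{c}]p(\overline{c})-E[Y|\overline{a},c]p(c)-E[Y|\overline{a},\overline{c}]p(\overline{c})$; $RD_{obs}=E[Y|a,d]p(d)+E[Y|a,\overline{d}]p(\overline{d})-E[Y|\overline{a},d]p(d)-E[Y|\overline{a},\overline{d}]p(\overline{d})$. $E[Y\mid A,D]$ is nondecreasing in $D$ if $E[Y\mid a,d]\ge E[Y\mid a,\overline{d}]$ and $E[Y\mid \overline{a},d]\ge E[Y\mid \overline{a},\overline{d}]$, nonincreasing if both are reversed. With $a=1,\overline{a}=0$, $E[A\mid D]=p(a\mid D)$ is nondecreasing in $D$ if $p(a\mid d)\ge p(a\mid\overline{d})$ and nonincreasing if $p(a\mid d)\le p(a\mid\overline{d})$. *)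

From HB Require Import structures.
From mathcomp Require Import all_boot all_order all_algebra.
From mathcomp Require Import all_classical all_reals.
From mathcomp Require Import ereal topology normedtype sequences measure
  lebesgue_measure lebesgue_integral probability.

Set Implicit Arguments.
Unset Strict Implicit.
Unset Printing Implicit Defensive.
Import Order.TTheory GRing.Theory Num.Theory.
Local Open Scope classical_set_scope.
Local Open Scope ring_scope.

Section Defs.
Context {d : measure_display} {T : measurableType d} {R : realType}.
Variable P : probability T R.

(* A binary random variable is represented by the event where it takes
   its "first" value (a, c, d); [ev S b] is the event {X = x} with
   x = first value when b = true and x = second value (bar) when b = false. *)
Definition ev (S : set T) (b : bool) : set T := if b then S else ~` S.

Definition pr (E : set T) : R := fine (P E).

Definition cpr (E F : set T) : R := pr (E `&` F) / pr F.

Definition cexp (Y : T -> R) (F : set T) : R :=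
  fine (\int[P]_(x in F) (Y x)%:E) / pr F.

Definition RD_true (A C : set T) (Y : T -> R) : R :=
  cexp Y (ev A true `&` ev C true) * pr (ev C true)
  + cexp Y (ev A true `&` ev C false) * pr (ev C false)
  - cexp Y (ev A false `&` ev C true) * pr (ev C true)
  - cexp Y (ev A false `&` ev C false) * pr (ev C false).

Definition RD_obs (A D : set T) (Y : T -> R) : R :=
  cexp Y (ev A true `&` ev D true) * pr (ev D true)
  + cexp Y (ev A true `&` ev D false) * pr (ev D false)
  - cexp Y (ev A false `&` ev D true) * pr (ev D true)
  - cexp Y (ev A false `&` ev D false) * pr (ev D false).

Definition EY_AD_nondecr (A D : set T) (Y : T -> R) : Prop :=
  cexp Y (ev A true `&` ev D true) >= cexp Y (ev A true `&` ev D false) /\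
  cexp Y (ev A false `&` ev D true) >= cexp Y (ev A false `&` ev D false).
Definition EY_AD_nonincr (A D : set T) (Y : T -> R) : Prop :=
  cexp Y (ev A true `&` ev D true) <= cexp Y (ev A true `&` ev D false) /\
  cexp Y (ev A false `&` ev D true) <= cexp Y (ev A false `&` ev D false).

(* E[A | D] = p(a | D) (with a = 1, abar = 0) nondecreasing / nonincreasing *)
Definition EA_D_nondecr (A D : set T) : Prop :=
  cpr (ev A true) (ev D true) >= cpr (ev A true) (ev D false).
Definition EA_D_nonincr (A D : set T) : Prop :=
  cpr (ev A true) (ev D true) <= cpr (ev A true) (ev D false).

Definition factorizes (A C D : set T) (Y : T -> R) : Prop :=
  forall (x y z : bool) (B : set R), measurable B ->
    pr (ev A x `&` ev C y `&` ev D z `&` Y @^-1` B) =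
    pr (ev D z) * cpr (ev C y) (ev D z) * cpr (ev A x) (ev C y)
      * cpr (Y @^-1` B) (ev A x `&` ev C y).

Definition dependent (C D : set T) : Prop :=
  P (C `&` D) <> (P C * P D)%E.

End Defs.

(* Write q for the joint law of (C, D), s y := p(a | C = y) and m x y := E[Y | A = x, C = y];
   the factorization gives p(A = x, C = y, D = z) = q(y, z) p(A = x | C = y).  With
   Δ := q(c,d) q(c̄,d̄) - q(c,d̄) q(c̄,d), nonzero since C and D are dependent, one computes
   that E[Y | x, d] - E[Y | x, d̄] is a positive multiple of Δ (m x c - m x c̄), that
   p(a | d) - p(a | d̄) is a positive multiple of Δ (s c - s c̄), and that RD_obs - RD_true is
   a nonnegative combination of the products (s c - s c̄)(m x c - m x c̄).  Multiplying the
   two D-differences therefore cancels Δ² and leaves the sign of these products.  The only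
   measure-theoretic input is that, given A = x and C = y, the law of Y does not depend
   on D, so the integral of Y over a cell is p(cell) m x y. *)

From mathcomp Require Import all_boot all_order all_algebra.
From mathcomp Require Import all_classical all_reals.
From mathcomp Require Import ereal topology normedtype sequences measure
  lebesgue_measure lebesgue_integral probability measurable_realfun numfun.
From mathcomp Require Import ring lra.
Set Implicit Arguments.
Unset Strict Implicit.
Unset Printing Implicit Defensive.
Import Order.TTheory GRing.Theory Num.Theory.
Local Open Scope classical_set_scope.
Local Open Scope ring_scope.

Section BinaryModel.
Variable R : realFieldType.
(* [pCD y z] = p(C = y, D = z), [pa_C y] = p(a | C = y), [EY_AC x y] = E[Y | A = x, C = y];
   [cell x y z] is then p(A = x, C = y, D = z) under the factorization. *)
Variables (pCD : bool -> bool -> R) (pa_C : bool -> R) (EY_AC : bool -> bool -> R).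

Definition pA_C (x y : bool) : R := if x then pa_C y else 1 - pa_C y.
Definition cell (x y z : bool) : R := pCD y z * pA_C x y.
Definition pAD (x z : bool) : R := cell x true z + cell x false z.
Definition pC (y : bool) : R := pCD y true + pCD y false.
Definition pD (z : bool) : R := pCD true z + pCD false z.
Definition pa_D (z : bool) : R := pAD true z / pD z.
Definition EY_AD (x z : bool) : R :=
  (EY_AC x true * cell x true z + EY_AC x false * cell x false z) / pAD x z.

Definition rd_obs : R := EY_AD true true * pD true + EY_AD true false * pD false
  - EY_AD false true * pD true - EY_AD false false * pD false.
Definition rd_true : R := EY_AC true true * pC true + EY_AC true false * pC false
  - EY_AC false true * pC true - EY_AC false false * pC false.

Definition pCD_det : R := pCD true true * pCD false false - pCD true false * pCD false true.

Lemma pCD_detE : pC true + pC false = 1 -> pCD_det = pCD true true - pC true * pD true.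
Proof.
move=> total1; apply/eqP; rewrite -subr_eq0.
have -> : pCD_det - (pCD true true - pC true * pD true) =
    pCD true true * (pC true + pC false - 1) by rewrite /pCD_det /pC /pD; ring.
by rewrite total1 subrr mulr0.
Qed.

Hypotheses (pCD_gt0 : forall y z, 0 < pCD y z)
  (pa_C_gt0 : forall y, 0 < pa_C y) (pa_C_lt1 : forall y, pa_C y < 1).

Lemma pA_C_gt0 x y : 0 < pA_C x y.
Proof. by case: x; rewrite /pA_C ?subr_gt0. Qed.

Lemma pAD_gt0 x z : 0 < pAD x z.
Proof. by rewrite addr_gt0 // mulr_gt0 // pA_C_gt0. Qed.

Lemma pD_gt0 z : 0 < pD z.
Proof. exact: addr_gt0. Qed.

Definition comono_AC (x : bool) : R :=
  (pa_C true - pa_C false) * (EY_AC x true - EY_AC x false).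

Definition comono_AD (x : bool) : R :=
  (EY_AD x true - EY_AD x false) * (pa_D true - pa_D false).

Definition gap_weight (x : bool) : R :=
  pCD true true * pCD false true / pAD x true + pCD true false * pCD false false / pAD x false.

Definition comono_weight (x : bool) : R :=
  pCD_det ^+ 2 * (pA_C x true * pA_C x false / (pAD x true * pAD x false * (pD true * pD false))).

Lemma gap_weight_ge0 x : 0 <= gap_weight x.
Proof. by rewrite addr_ge0 // divr_ge0 ?mulr_ge0 ?ltW ?pAD_gt0. Qed.

Lemma comono_weight_gt0 x : pCD_det != 0 -> 0 < comono_weight x.
Proof.
move=> det_neq0; rewrite mulr_gt0 ?exprn_even_gt0 ?det_neq0 ?orbT //.
by rewrite divr_gt0 ?mulr_gt0 ?pA_C_gt0 ?pAD_gt0 ?pD_gt0.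
Qed.

Lemma rd_obs_subr_true :
  rd_obs - rd_true = comono_AC true * gap_weight true + comono_AC false * gap_weight false.
Proof.
have := pAD_gt0 true true; have := pAD_gt0 true false.
have := pAD_gt0 false true; have := pAD_gt0 false false.
have := pD_gt0 true; have := pD_gt0 false.
rewrite /rd_obs /rd_true /comono_AC /gap_weight /EY_AD /pAD /cell /pA_C /pC /pD => ? ? ? ? ? ?.
by field; rewrite !lt0r_neq0.
Qed.

Lemma comono_ADE x : comono_AD x = comono_AC x * comono_weight x.
Proof.
have := pAD_gt0 x true; have := pAD_gt0 x false.
have := pAD_gt0 true true; have := pAD_gt0 true false.
have := pD_gt0 true; have := pD_gt0 false.
rewrite /comono_AD /comono_AC /comono_weight /EY_AD /pa_D /pCD_det /pAD /cell /pD.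
case: x => /= ? ? ? ? ? ?; field; rewrite !lt0r_neq0 //.
Qed.

Section Comonotone.
Hypothesis det_neq0 : pCD_det != 0.

Lemma rd_true_le_obs : (forall x, 0 <= comono_AD x) -> rd_true <= rd_obs.
Proof.
move=> comono; have comono_AC_ge0 x : 0 <= comono_AC x.
  by have := comono x; rewrite comono_ADE pmulr_lge0 // comono_weight_gt0.
by rewrite -subr_ge0 rd_obs_subr_true addr_ge0 // mulr_ge0 // gap_weight_ge0.
Qed.

Lemma rd_obs_le_true : (forall x, comono_AD x <= 0) -> rd_obs <= rd_true.
Proof.
move=> antimono; have comono_AC_le0 x : comono_AC x <= 0.
  by have := antimono x; rewrite comono_ADE pmulr_lle0 // comono_weight_gt0.
rewrite -subr_le0 rd_obs_subr_true.
have := mulr_le0_ge0 (comono_AC_le0 true) (gap_weight_ge0 true).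
have := mulr_le0_ge0 (comono_AC_le0 false) (gap_weight_ge0 false).
lra.
Qed.

End Comonotone.
End BinaryModel.

Section pushforward_restr.
Local Open Scope ereal_scope.
Context d (T : measurableType d) (R : realType) (P : {measure set T -> \bar R}).
Variables (Y : T -> R) (E : set T).
Hypotheses (mY : measurable_fun setT Y) (mE : measurable E).

Lemma ge0_integral_pushforward_restr (g : R -> \bar R) :
  measurable_fun setT g -> (forall r, 0 <= g r) ->
  \int[P]_(t in E) g (Y t) = \int[pushforward (mrestr P mE) Y]_(r in setT) g r.
Proof.
move=> mg g0; have mCE := measurableC mE.
rewrite [RHS]ge0_integral_pushforward // preimage_setT.
rewrite -(setUv E) integral_setU //; last 2 first.
- by rewrite setUv; apply: measurableT_comp.
- by rewrite /disj_set setICr.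
rewrite (null_set_integral (mu := mrestr P mE) (N := ~` E)) //; last 2 first.
- exact/measurable_funTS/measurableT_comp.
- by change (P (~` E `&` E) = 0); rewrite setICl measure0.
rewrite adde0; apply: eq_measure_integral => B mB BE.
by change (P B = P (B `&` E)); rewrite setIidl.
Qed.

End pushforward_restr.

Section law_scale.
Local Open Scope ereal_scope.
Context d (T : measurableType d) (R : realType) (P : {measure set T -> \bar R}).
Variables (Y : T -> R) (E F : set T) (k : R).
Hypotheses (mY : measurable_fun setT Y) (mE : measurable E) (mF : measurable F).
Hypotheses (k_ge0 : (0 <= k)%R)
  (law_scale : forall B, measurable B -> P (Y @^-1` B `&` E) = k%:E * P (Y @^-1` B `&` F)).

Lemma ge0_integral_law_scale (g : R -> \bar R) :
  measurable_fun setT g -> (forall r, 0 <= g r) ->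
  \int[P]_(t in E) g (Y t) = k%:E * \int[P]_(t in F) g (Y t).
Proof.
move=> mg g0; rewrite (ge0_integral_pushforward_restr P mY mE) //.
rewrite (ge0_integral_pushforward_restr P mY mF) //.
rewrite -[k]/((NngNum k_ge0)%:num) -ge0_integral_mscale //.
by apply: eq_measure_integral => B mB _; exact: law_scale.
Qed.

Lemma integral_law_scale : P.-integrable F (fun t => (Y t)%:E) ->
  \int[P]_(t in E) (Y t)%:E = k%:E * \int[P]_(t in F) (Y t)%:E.
Proof.
move=> iF; have mEFin : measurable_fun [set: R] (@EFin R) by exact: EFin_measurable.
have posE : funepos (fun t => (Y t)%:E) = funepos (@EFin R) \o Y.
  by apply/funext => t /=; rewrite !funeposE.
have negE : funeneg (fun t => (Y t)%:E) = funeneg (@EFin R) \o Y.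
  by apply/funext => t /=; rewrite !funenegE.
rewrite integralE [in RHS]integralE posE negE.
rewrite (ge0_integral_law_scale (measurable_funepos mEFin) (funepos_ge0 _)).
rewrite (ge0_integral_law_scale (measurable_funeneg mEFin) (funeneg_ge0 _)).
rewrite [RHS]muleBr //; apply: fin_num_adde_defl; rewrite fin_numN -negE.
exact: (integrable_fin_num mF (integrable_funeneg mF iF)).
Qed.

End law_scale.

Section probability_events.
Context d (T : measurableType d) (R : realType) (P : probability T R).

Lemma measurable_ev (S : set T) b : measurable S -> measurable (ev S b).
Proof. by case: b => mS //=; exact: measurableC. Qed.

Lemma prE (X : set T) : measurable X -> (pr P X)%:E = P X.
Proof. by move=> mX; rewrite /pr fineK // fin_num_measure. Qed.

Lemma pr_gt0 (X : set T) : measurable X -> (0 < P X)%E -> 0 < pr P X.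
Proof. by move=> mX PX_gt0; apply: fine_gt0; rewrite PX_gt0 /= ltey_eq fin_num_measure. Qed.

Lemma pr_setT : pr P setT = 1.
Proof. by rewrite /pr probability_setT. Qed.

Lemma pr_split_ev (X S : set T) : measurable X -> measurable S ->
  pr P X = pr P (X `&` ev S true) + pr P (X `&` ev S false).
Proof.
move=> mX mS; have mXS b : measurable (X `&` ev S b).
  by apply: measurableI => //; exact: measurable_ev.
apply: EFin_inj; rewrite EFinD !prE // -measureU //.
  by rewrite -setIUr setUv setIT.
by rewrite setIACA setICr setI0.
Qed.

Lemma integral_split_ev (Y : T -> R) (X S : set T) :
  P.-integrable setT (fun t => (Y t)%:E) -> measurable X -> measurable S ->
  fine (\int[P]_(t in X) (Y t)%:E) =
  fine (\int[P]_(t in X `&` ev S true) (Y t)%:E) +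
  fine (\int[P]_(t in X `&` ev S false) (Y t)%:E).
Proof.
move=> iY mX mS; have mXS b : measurable (X `&` ev S b).
  by apply: measurableI => //; exact: measurable_ev.
have iYX (Z : set T) : measurable Z -> P.-integrable Z (fun t => (Y t)%:E).
  by move=> mZ; exact: integrableS iY.
rewrite -fineD ?(integrable_fin_num _ (iYX _ _)) // -integral_setU //.
- by rewrite -setIUr setUv setIT.
- by apply: measurable_int; rewrite -setIUr setUv setIT; exact: iYX.
- by rewrite /disj_set setIACA setICr setI0.
Qed.

End probability_events.

Section factorized_model.
Context d (T : measurableType d) (R : realType) (P : probability T R).
Variables (A C D : set T) (Y : T -> R).
Hypotheses (mA : measurable A) (mC : measurable C) (mD : measurable D)
  (mY : measurable_fun setT Y) (iY : P.-integrable setT (fun t => (Y t)%:E))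
  (hfact : factorizes P A C D Y)
  (hpos : forall x y z : bool, (0 < P (ev A x `&` ev C y `&` ev D z))%E).

Let cellE x y z := ev A x `&` ev C y `&` ev D z.
Let joint_CD y z := pr P (ev C y `&` ev D z).
Let pa_given_C y := cpr P (ev A true) (ev C y).
Let EY_given_AC x y := cexp P Y (ev A x `&` ev C y).

Let mevI (S S' : set T) b b' : measurable S -> measurable S' ->
  measurable (ev S b `&` ev S' b').
Proof. by move=> mS mS'; apply: measurableI; exact: measurable_ev. Qed.

Let mcellE x y z : measurable (cellE x y z).
Proof. by apply: measurableI; [exact: mevI | exact: measurable_ev]. Qed.

Lemma pr_cellE_gt0 x y z : 0 < pr P (cellE x y z).
Proof. exact: pr_gt0 (mcellE x y z) (hpos x y z). Qed.

Lemma pr_AC_gt0 x y : 0 < pr P (ev A x `&` ev C y).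
Proof. by rewrite (pr_split_ev _ (mevI _ _ mA mC) mD) addr_gt0 ?pr_cellE_gt0. Qed.

Lemma pr_C_split y :
  pr P (ev C y) = pr P (ev A true `&` ev C y) + pr P (ev A false `&` ev C y).
Proof. by rewrite (pr_split_ev _ (measurable_ev _ mC) mA) ![ev C y `&` _]setIC. Qed.

Lemma pr_C_gt0 y : 0 < pr P (ev C y).
Proof. by rewrite pr_C_split addr_gt0 ?pr_AC_gt0. Qed.

Lemma joint_CD_gt0 y z : 0 < joint_CD y z.
Proof.
rewrite /joint_CD (pr_split_ev _ (mevI _ _ mC mD) mA) addr_gt0 //.
all: by rewrite setIC setIA pr_cellE_gt0.
Qed.

Lemma pr_D y : pr P (ev D y) = pD joint_CD y.
Proof. by rewrite (pr_split_ev _ (measurable_ev _ mD) mC) ![ev D y `&` _]setIC. Qed.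

Lemma pr_C y : pr P (ev C y) = pC joint_CD y.
Proof. by rewrite (pr_split_ev _ (measurable_ev _ mC) mD). Qed.

Lemma pa_given_C_gt0 y : 0 < pa_given_C y.
Proof. by rewrite divr_gt0 ?pr_AC_gt0 ?pr_C_gt0. Qed.

Lemma pa_given_C_lt1 y : pa_given_C y < 1.
Proof.
rewrite /pa_given_C /cpr ltr_pdivrMr ?pr_C_gt0 // mul1r pr_C_split.
by rewrite ltrDl pr_AC_gt0.
Qed.

Lemma cpr_A_C x y : cpr P (ev A x) (ev C y) = pA_C pa_given_C x y.
Proof.
case: x => //; rewrite /pA_C /pa_given_C /cpr.
move: (pr_C_split y) (pr_C_gt0 y) => ->.
by move=> /lt0r_neq0 split_neq0; field.
Qed.

Lemma pr_cellE_chain x y z :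
  pr P (cellE x y z) = pr P (ev D z) * cpr P (ev C y) (ev D z) * cpr P (ev A x) (ev C y).
Proof.
have := hfact x y z measurableT; rewrite preimage_setT setIT => ->.
by rewrite /cpr setTI divff ?mulr1 // lt0r_neq0 ?pr_AC_gt0.
Qed.

Lemma pr_cellE x y z : pr P (cellE x y z) = cell joint_CD pa_given_C x y z.
Proof.
rewrite pr_cellE_chain cpr_A_C /cell /cpr -/(joint_CD y z) mulrCA divff ?mulr1 //.
by rewrite lt0r_neq0 // pr_D pD_gt0 // => ? ?; exact: joint_CD_gt0.
Qed.

Lemma integral_cellE x y z :
  fine (\int[P]_(t in cellE x y z) (Y t)%:E) = EY_given_AC x y * pr P (cellE x y z).
Proof.
(* Given A = x and C = y, the law of Y does not depend on D. *)
set k := pr P (cellE x y z) / pr P (ev A x `&` ev C y).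
have k_ge0 : 0 <= k by rewrite divr_ge0 ?ltW ?pr_cellE_gt0 ?pr_AC_gt0.
have mAC := mevI x y mA mC; have mcell := mcellE x y z.
have law B : measurable B ->
    P (Y @^-1` B `&` cellE x y z) = (k%:E * P (Y @^-1` B `&` (ev A x `&` ev C y)))%E.
  move=> mB; have mYB : measurable (Y @^-1` B).
    by rewrite -[X in measurable X]setTI; exact: mY.
  rewrite -!prE; last 2 first.
  - by apply: measurableI.
  - by apply: measurableI.
  rewrite -EFinM setIC (hfact x y z mB) -pr_cellE_chain /k /cpr setIC.
  by congr EFin; field; rewrite lt0r_neq0 ?pr_AC_gt0.
have iAC : P.-integrable (ev A x `&` ev C y) (fun t => (Y t)%:E) by exact: integrableS iY.
rewrite (integral_law_scale mY mcell mAC k_ge0 law iAC).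
rewrite fineM ?(integrable_fin_num mAC iAC) //= /EY_given_AC /cexp /k; ring.
Qed.

Lemma pr_AD x z : pr P (ev A x `&` ev D z) = pAD joint_CD pa_given_C x z.
Proof.
rewrite (pr_split_ev _ (mevI _ _ mA mD) mC) /pAD -!pr_cellE.
by rewrite ![ev A x `&` ev D z `&` _]setIAC.
Qed.

Lemma cexp_AD x z : cexp P Y (ev A x `&` ev D z) = EY_AD joint_CD pa_given_C EY_given_AC x z.
Proof.
rewrite /cexp (integral_split_ev iY (mevI _ _ mA mD) mC) pr_AD /EY_AD -!pr_cellE.
by rewrite ![ev A x `&` ev D z `&` _]setIAC !integral_cellE.
Qed.

Lemma cpr_A_D z : cpr P (ev A true) (ev D z) = pa_D joint_CD pa_given_C z.
Proof. by rewrite /cpr pr_AD pr_D. Qed.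

Hypothesis hdep : dependent P C D.

Lemma pCD_det_neq0 : pCD_det joint_CD != 0.
Proof.
have total1 : pC joint_CD true + pC joint_CD false = 1.
  by rewrite -!pr_C -(pr_setT P) (pr_split_ev _ measurableT mC) !setTI.
rewrite pCD_detE // -!pr_C -!pr_D subr_eq0; apply/eqP; rewrite /joint_CD => dep_eq.
apply: hdep; rewrite -[C]/(ev C true) -[D]/(ev D true) -!prE ?measurable_ev //.
  by rewrite dep_eq EFinM.
exact: mevI.
Qed.

Definition comono_gap x :=
  (cexp P Y (ev A x `&` ev D true) - cexp P Y (ev A x `&` ev D false)) *
  (cpr P (ev A true) (ev D true) - cpr P (ev A true) (ev D false)).

Lemma RD_true_le_obs : (forall x, 0 <= comono_gap x) -> RD_true P A C Y <= RD_obs P A D Y.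
Proof.
move=> comono; rewrite /RD_true /RD_obs !cexp_AD !pr_C !pr_D.
apply: (rd_true_le_obs joint_CD_gt0 pa_given_C_gt0 pa_given_C_lt1 pCD_det_neq0) => x.
by have := comono x; rewrite /comono_gap !cexp_AD !cpr_A_D.
Qed.

Lemma RD_obs_le_true : (forall x, comono_gap x <= 0) -> RD_obs P A D Y <= RD_true P A C Y.
Proof.
move=> antimono; rewrite /RD_true /RD_obs !cexp_AD !pr_C !pr_D.
apply: (rd_obs_le_true joint_CD_gt0 pa_given_C_gt0 pa_given_C_lt1 pCD_det_neq0) => x.
by have := antimono x; rewrite /comono_gap !cexp_AD !cpr_A_D.
Qed.

End factorized_model.

Theorem corollary3 (d : measure_display) (T : measurableType d) (R : realType)
  (P : probability T R) (A C D : set T) (Y : T -> R)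
  (mA : measurable A) (mC : measurable C) (mD : measurable D)
  (mY : measurable_fun setT Y)
  (iY : P.-integrable setT (fun t => (Y t)%:E))
  (hfact : factorizes P A C D Y)
  (hdep : dependent P C D)
  (hpos : forall x y z : bool, (0 < P (ev A x `&` ev C y `&` ev D z))%E) :
  ((EY_AD_nondecr P A D Y /\ EA_D_nondecr P A D) \/
   (EY_AD_nonincr P A D Y /\ EA_D_nonincr P A D) ->
     RD_obs P A D Y >= RD_true P A C Y) /\
  ((EY_AD_nondecr P A D Y /\ EA_D_nonincr P A D) \/
   (EY_AD_nonincr P A D Y /\ EA_D_nondecr P A D) ->
     RD_obs P A D Y <= RD_true P A C Y).
Proof.
rewrite /EY_AD_nondecr /EY_AD_nonincr /EA_D_nondecr /EA_D_nonincr.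
split=> [mono | mono].
- apply: (RD_true_le_obs mA mC mD mY iY hfact hpos hdep) => x.
  by case: mono => -[[EY1 EY0] pa]; case: x; rewrite /comono_gap; nra.
- apply: (RD_obs_le_true mA mC mD mY iY hfact hpos hdep) => x.
  by case: mono => -[[EY1 EY0] pa]; case: x; rewrite /comono_gap; nra.
Qed.
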